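(* Let $d\ge 1$, let $\mathcal A=\{A_n:n\ge2\}$ be the family defined below, and let $\mathcal B$ be any family of bounded convex sets in $\mathbb R^{d+1}$ each of which contains the cube $C=\{x\in\mathbb R^{d+1}: x_1=0,\ 0\le x_i\le 1 \text{ for } i=2,\dots,d+1\}$. Then $\mathcal F=\mathcal A\cup\mathcal B$ satisfies the $(d+1+2k,\,d+1+k)$-property for every integer $k\ge0$.
   Context: Let $e_1,\dots,e_{d+1}$ be the standard basis of $\mathbb R^{d+1}$. For $0\le\alpha\le1$, let $S_\alpha\subset\operatorname{span}(e_2,\dots,e_{d+1})$ be the $(d-1)$-dimensional simplex with vertices $e_2+\dots+e_k+\alpha e_{k+1}$ for $k=1,\dots,d$. For each integer $n\ge2$ let $I_n=\{te_1:t\ge n\}$ and $A_n=\operatorname{conv}(S_{1/n}\cup I_n)$. A family of at least $p$ sets satisfies the $(p,q)$-property if among any $p$ of its members there are $q$ with a common point. *)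

(* points of R^(d+1) are row vectors 'rV[R]_(d.+1) over an
   arbitrary real field R; coordinate x_j (1-based in the paper) is x 0 (j-1). *)
From HB Require Import structures.
From mathcomp Require Import all_boot all_order all_algebra.
Set Implicit Arguments. Unset Strict Implicit. Unset Printing Implicit Defensive.
Import Order.TTheory GRing.Theory Num.Theory.
Local Open Scope ring_scope.

Section Defs.
Variables (R : realFieldType) (d : nat).

Definition pt := 'rV[R]_(d.+1).
Definition pset := pt -> Prop.

Definition conv (X : pset) : pset := fun x =>
  exists (m : nat) (p : 'I_m -> pt) (w : 'I_m -> R),
    (forall i, X (p i)) /\ (forall i, 0 <= w i) /\
    \sum_(i < m) w i = 1 /\ x = \sum_(i < m) w i *: p i.

Definition convex (X : pset) : Prop :=
  forall x y t, X x -> X y -> 0 <= t -> t <= 1 -> X ((1 - t) *: x + t *: y).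

Definition bounded (X : pset) : Prop :=
  exists M : R, forall x, X x -> forall i, `|x 0 i| <= M.

(* standard basis vector with index i (0-based); e_1 of the paper is ebasis ord0 *)
Definition ebasis (i : 'I_(d.+1)) : pt := \row_j ((j == i)%:R).

(* vertex e_2 + ... + e_k + alpha e_{k+1} (k = 1..d): 0-based coordinates
   1..k-1 equal 1, coordinate k equals alpha, others 0 *)
Definition svert (alpha : R) (k : nat) : pt :=
  \row_j (if (0 < (j : nat))%N && ((j : nat) < k)%N then 1
          else if (j : nat) == k then alpha else 0).

Definition Ssimplex (alpha : R) : pset :=
  conv (fun x => exists k, (1 <= k <= d)%N /\ x = svert alpha k).

Definition Iray (n : nat) : pset :=
  fun x => exists t : R, n%:R <= t /\ x = t *: ebasis ord0.

Definition An (n : nat) : pset :=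
  conv (fun x => Ssimplex (n%:R)^-1 x \/ Iray n x).

Definition cube : pset :=
  fun x => x 0 ord0 = 0 /\ forall i : 'I_(d.+1), i != ord0 -> 0 <= x 0 i <= 1.

Definition distinct_sets (p : nat) (f : 'I_p -> pset) : Prop :=
  forall i j, i != j -> ~ (forall x, f i x <-> f j x).

Definition pq_property (F : pset -> Prop) (p q : nat) : Prop :=
  (exists f : 'I_p -> pset, (forall i, F (f i)) /\ distinct_sets f) /\
  forall f : 'I_p -> pset, (forall i, F (f i)) -> distinct_sets f ->
    exists g : 'I_q -> 'I_p, injective g /\ exists x, forall j, f (g j) x.

End Defs.

From HB Require Import structures.
From mathcomp Require Import all_boot all_order all_algebra.
From mathcomp Require Import ring lra zify.
From Stdlib Require Import ClassicalEpsilon.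
Set Implicit Arguments. Unset Strict Implicit. Unset Printing Implicit Defensive.
Import Order.TTheory GRing.Theory Num.Theory.
Local Open Scope ring_scope.

(* Among any d+1+2k members, choose d+1+k of them that are either all of the
   form A_n (they share the point m e_1 of the ray for m large), or of which
   at most d are of the form A_n.  In the second case, with a_1, ..., a_r
   (r <= d) the parameters 1/n of these A_n, take X = B_1 + ... + B_r, a sum of
   independent Bernoulli variables with P(B_i = 1) = a_i, and the point y with
   y_1 = 0 and y_j = P(X >= j - 1).  It lies in the cube, hence in every member
   of B.  Conditioning on B_i shows that y is the convex combination of the
   vertices e_2 + ... + e_l + a_i e_(l+1) of S_(a_i) with weights
   P(X - B_i = l - 1), so y lies in every chosen A_n. *)

Section BernoulliTail.
Variable R : realFieldType.

Definition bern_tail_step (a : R) (g : nat -> R) (j : nat) : R :=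
  if j is j'.+1 then a * g j' + (1 - a) * g j else 1.

(* [bern_tail s j] is the probability that a sum of independent Bernoulli
   variables with parameters [s] is at least [j]. *)
Definition bern_tail (s : seq R) : nat -> R :=
  foldr bern_tail_step (fun j => (j == 0%N)%:R) s.

Definition prob_seq (s : seq R) := all (fun a => 0 <= a <= 1) s.

Lemma bern_tail0 s : bern_tail s 0 = 1.
Proof. by case: s. Qed.

Lemma bern_tail_swap a b s :
  bern_tail [:: a, b & s] =1 bern_tail [:: b, a & s].
Proof. by case=> [|[|j]] //=; rewrite ?bern_tail0; ring. Qed.

Lemma bern_tail_rem s a : a \in s -> bern_tail s =1 bern_tail (a :: rem a s).
Proof.
elim: s => // b s IH; rewrite in_cons => /orP [/eqP ->|a_s] j.
  by rewrite /= eqxx.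
have [-> //|ba] := eqVneq b a; first by rewrite /= eqxx.
rewrite /= (negbTE ba) -[RHS]bern_tail_swap.
by case: j => [|j] //=; rewrite !IH.
Qed.

Lemma bern_tail_eq0 s j : (size s < j)%N -> bern_tail s j = 0.
Proof.
elim: s j => [|a s IH] [|j] //= lt_sj.
by rewrite !IH ?mulr0 ?addr0 //; lia.
Qed.

Lemma bern_tail_bounds s : prob_seq s ->
  forall j, 0 <= bern_tail s j <= 1 /\ bern_tail s j.+1 <= bern_tail s j.
Proof.
elim: s => [_ [|j]|a s IH] /=; rewrite ?lexx ?ler01 //.
case/andP=> /andP [a0 a1] /IH {}IH [|j] /=.
  by have [] := IH 0%N; rewrite bern_tail0 ler01 lexx; split => //; nra.
have [/andP [g0 g1] g10] := IH j; have [/andP [h0 h1] h10] := IH j.+1.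
by split; [apply/andP; split|]; nra.
Qed.

Lemma sum_tail_diff (T : nat -> R) n :
  \sum_(i < n) (T i - T i.+1) = T 0%N - T n.
Proof.
elim: n => [|n IH]; first by rewrite big_ord0 subrr.
by rewrite big_ord_recr /= IH; ring.
Qed.

End BernoulliTail.

Section BernoulliPoint.
Variables (R : realFieldType) (d : nat).

Definition bern_point (s : seq R) : pt R d :=
  \row_(j < d.+1) (if (j : nat) == 0%N then 0 else bern_tail s j).

Lemma bern_point_cube s : prob_seq s -> cube (bern_point s).
Proof.
move=> s01; split=> [|i i0]; rewrite mxE //.
have -> : ((i : nat) == 0%N) = false by apply: contraNF i0 => /eqP i0; apply/eqP/val_inj.
by have [] := bern_tail_bounds s01 i.
Qed.

Lemma bern_point_rem s a : a \in s -> bern_point s = bern_point (a :: rem a s).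
Proof. by move=> a_s; apply/rowP => j; rewrite !mxE (bern_tail_rem a_s). Qed.

(* Coordinate [j'.+1] of [\sum_(i < n) (T i - T i.+1) *: svert a i.+1]. *)
Lemma svert_combination_coord (T : nat -> R) (a : R) j' n :
  \sum_(i < n) (T i - T i.+1) *
    (if (0 < j'.+1)%N && (j'.+1 < i.+1)%N then 1 else if j'.+1 == i.+1 then a else 0)
  = if (j' < n)%N then T j'.+1 - T n + a * (T j' - T j'.+1) else 0.
Proof.
elim: n => [|n IH]; first by rewrite big_ord0.
rewrite big_ord_recr /= IH.
case: (ltngtP j' n) => [lt_jn|lt_nj|->]; last by rewrite ltnSn ltnn eqxx /=; ring.
- by rewrite ifT ?ifT; [ring|lia|lia].
- rewrite ifF ?ifF ?ifF; [ring|apply/eqP; lia|lia|lia].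
Qed.

Lemma bern_point_Ssimplex s a : prob_seq s -> (size s <= d)%N -> a \in s ->
  Ssimplex a (bern_point s).
Proof.
move=> s01 size_s a_s.
have /andP [a0 a1] : 0 <= a <= 1 := allP s01 a a_s.
set r := rem a s.
have r01 : prob_seq r by apply/allP => b /mem_rem /(allP s01).
have size_r : (size r < d)%N.
  by rewrite size_rem //; case: s a_s size_s {s01 r r01}.
have tail_d : bern_tail r d = 0 by apply: bern_tail_eq0.
rewrite (bern_point_rem a_s).
exists d, (fun i : 'I_d => svert d a i.+1),
  (fun i : 'I_d => bern_tail r i - bern_tail r i.+1).
split; first by move=> i; exists i.+1; split => //; apply/andP.
split; first by move=> i; have [_ ?] := bern_tail_bounds r01 i; rewrite subr_ge0.
split; first by rewrite sum_tail_diff bern_tail0 tail_d subr0.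
apply/rowP => -[[|j'] lt_j] /=; rewrite !mxE summxE.
  by rewrite big1 // => i _; rewrite !mxE mulr0.
under eq_bigr => i _ do rewrite !mxE.
rewrite svert_combination_coord ifT ?tail_d /=; [ring|lia].
Qed.

End BernoulliPoint.

Section ConvexHull.
Variables (R : realFieldType) (d : nat).
Implicit Types X : pset R d.

Lemma conv_sub X x : X x -> conv X x.
Proof.
move=> Xx; exists 1%N, (fun=> x), (fun=> 1).
by split=> //; split=> [_|]; rewrite ?ler01 // !big_ord1 scale1r.
Qed.

Lemma conv_ge X (i1 i2 : 'I_d.+1) (a b c : R) :
  (forall x, X x -> c <= a * x 0 i1 + b * x 0 i2) ->
  forall x, conv X x -> c <= a * x 0 i1 + b * x 0 i2.
Proof.
move=> geX x [m [p [w [Xp [w0 [w1 ->]]]]]].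
rewrite !summxE.
under eq_bigr => i _ do rewrite mxE.
under [X in _ <= _ + b * X]eq_bigr => i _ do rewrite mxE.
rewrite !mulr_sumr -big_split /=.
rewrite -[c]mul1r -w1 mulr_suml; apply: ler_sum => i _.
by have := geX _ (Xp i); have := w0 i; nra.
Qed.

End ConvexHull.

Section Anset.
Variables (R : realFieldType) (d : nat).

Lemma An_ray n m : (n <= m)%N -> @An R d n (m%:R *: ebasis R ord0).
Proof. by move=> le_nm; apply: conv_sub; right; exists m%:R; rewrite ler_nat. Qed.

(* On A_m the linear form x_1 + m^2 x_2 is at least m, because it is at least
   m on S_{1/m} and on the ray I_m. *)
Lemma An_notin_ray (hd : (0 < d)%N) n m : (2 <= m)%N -> (n < m)%N ->
  ~ @An R d m (n%:R *: ebasis R ord0).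
Proof.
move=> m2 lt_nm.
pose i1 : 'I_d.+1 := Ordinal (hd : (1 < d.+1)%N).
have m0 : 0 < (m%:R : R) by rewrite ltr0n; lia.
have m1 : 1 <= (m%:R : R) by rewrite ler1n; lia.
have ge_gen (x : pt R d) : Ssimplex (m%:R)^-1 x \/ Iray m x ->
    m%:R <= 1 * x 0 ord0 + m%:R ^+ 2 * x 0 i1.
  case=> [Sx|[t [le_mt ->]]]; last by rewrite !mxE /= mulr1 mulr0 mulr0 addr0 mul1r.
  apply: (conv_ge _ Sx) => _ [[|[|k]] [/andP [k1 kd] ->]] //; rewrite !mxE /=.
    by rewrite mul1r add0r expr2 -mulrA mulfV ?mulr1 // lt0r_neq0.
  by rewrite mul1r add0r mulr1; nra.
move=> /(conv_ge ge_gen).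
by rewrite !mxE /= mulr1 mulr0 mulr0 addr0 mul1r ler_nat; lia.
Qed.

Lemma An_neq (hd : (0 < d)%N) n m : (2 <= n)%N -> (2 <= m)%N -> n != m ->
  ~ (forall x, @An R d n x <-> @An R d m x).
Proof.
move=> n2 m2 /negPf neq_nm eq_nm.
have [lt_nm|lt_mn|] := ltngtP n m; last by move=> /eqP; rewrite neq_nm.
- by apply: (An_notin_ray hd m2 lt_nm); apply/eq_nm/An_ray.
- by apply: (An_notin_ray hd n2 lt_mn); apply/eq_nm/An_ray.
Qed.

Lemma An_common_point (ns : seq nat) :
  exists x, forall n, n \in ns -> @An R d n x.
Proof.
exists ((\max_(n <- ns) n)%:R *: ebasis R ord0) => n n_ns.
by apply: An_ray; apply: (@leq_bigmax_seq _ ns xpredT id).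
Qed.

Lemma An_cube_common_point (ns : seq nat) : all (leq 2) ns -> (size ns <= d)%N ->
  exists x, cube x /\ forall n, n \in ns -> @An R d n x.
Proof.
move=> ns2 size_ns; pose s := [seq (n%:R)^-1 : R | n <- ns].
have s01 : prob_seq s.
  apply/allP => _ /mapP [n n_ns ->].
  have n0 : 0 < (n%:R : R) by rewrite ltr0n; have := allP ns2 n n_ns; lia.
  by rewrite invr_ge0 ltW //= invf_le1 // ler1n; have := allP ns2 n n_ns; lia.
exists (bern_point d s); split=> [|n n_ns]; first exact: bern_point_cube.
apply/conv_sub; left; apply: bern_point_Ssimplex => //; first by rewrite size_map.
exact: map_f.
Qed.

End Anset.

Lemma split_choice (I : Type) (P : I -> nat -> Prop) (Q : I -> Prop) :
  (forall i, (exists n, P i n) \/ Q i) ->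
  exists (b : I -> bool) (n : I -> nat), forall i, if b i then P i (n i) else Q i.
Proof.
move=> PQ.
have bn_ex i : exists bn : bool * nat, if bn.1 then P i bn.2 else Q i.
  by case: (PQ i) => [[n Pn]|Qi]; [exists (true, n)|exists (false, 0%N)].
pose bn i := proj1_sig (constructive_indefinite_description _ (bn_ex i)).
exists (fun i => (bn i).1), (fun i => (bn i).2) => i.
exact: proj2_sig (constructive_indefinite_description _ (bn_ex i)).
Qed.

(* If at least d+1+k of the indices satisfy P take d+1+k of them; otherwise
   at least k+1 fail P, and we take as many of those as possible. *)
Lemma select_uniform_or_sparse d k (P : pred 'I_(d + 1 + 2 * k)) :
  exists g : 'I_(d + 1 + k) -> 'I_(d + 1 + 2 * k),
    injective g /\ ((forall j, P (g j)) \/ (count P (codom g) <= d)%N).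
Proof.
have size_enum_PC : (size (enum P) + size (enum (predC P)) = d + 1 + 2 * k)%N.
  by rewrite -!cardE cardC card_ord.
have [L [uniq_L size_L PL]] :
    exists L : seq 'I_(d + 1 + 2 * k), [/\ uniq L, size L == d + 1 + k & all P L \/ (count P L <= d)%N].
  have [le_qP|lt_Pq] := leqP (d + 1 + k) (size (enum P)).
    exists (take (d + 1 + k) (enum P)); split; first exact/take_uniq/enum_uniq.
      by rewrite size_takel.
    by left; apply/allP => x /mem_take; rewrite mem_enum.
  set b := minn (size (enum (predC P))) (d + 1 + k).
  exists (take b (enum (predC P)) ++ take (d + 1 + k - b) (enum P)); split.
  - rewrite cat_uniq; apply/and3P; split; try exact/take_uniq/enum_uniq.
    apply/hasPn => x /mem_take.
    by rewrite mem_enum => Px; apply/negP => /mem_take; rewrite mem_enum => /negP.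
  - rewrite size_cat !size_takel; rewrite /b; move: size_enum_PC lt_Pq;
    by set a := size (enum P); set c := size (enum (predC P)); lia.
  - right; rewrite count_cat (@eq_in_count _ _ pred0) ?count_pred0; last first.
      by move=> x /mem_take; rewrite mem_enum => /negPf.
    have := count_size P (take (d + 1 + k - b) (enum P)).
    rewrite size_takel; rewrite /b; move: size_enum_PC lt_Pq;
    by set a := size (enum P); set c := size (enum (predC P)); lia.
exists (tnth (Tuple size_L)); split; first exact/tuple_uniqP.
case: PL => [/allP PL|sparse]; [left=> j; apply/PL/mem_tnth|right].
by rewrite codomE map_tnth_enum.
Qed.

Theorem lemma2p4 (R : realFieldType) (d : nat) (hd : (1 <= d)%N)
  (B : pset R d -> Prop)
  (hB : forall X, B X ->
          bounded X /\ convex X /\ (forall x, cube x -> X x))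
  (k : nat) :
  pq_property (fun X => (exists n : nat, (2 <= n)%N /\ X = @An R d n) \/ B X)
    (d + 1 + 2 * k) (d + 1 + k).
Proof.
split.
  exists (fun i : 'I_(d + 1 + 2 * k) => @An R d (i + 2)); split.
    by move=> i; left; exists (i + 2)%N; rewrite leq_addl.
  by move=> i j ij; apply: An_neq; rewrite ?leq_addl // eqn_add2r.
move=> f hf _.
have [isA [nA fE]] := split_choice (P := fun i n => (2 <= n)%N /\ f i = An n) hf.
have [g [inj_g [allA|sparse]]] := select_uniform_or_sparse isA.
  have [x Ax] := An_common_point R d (map nA (codom g)).
  exists g; split=> //; exists x => j.
  by have := fE (g j); rewrite allA => -[_ ->]; apply/Ax/map_f/codom_f.
pose ns := [seq nA i | i <- codom g & isA i].
have [||x [cube_x Ax]] := @An_cube_common_point R d ns.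
- apply/allP => _ /mapP [i + ->]; rewrite mem_filter => /andP [Ai _].
  by have := fE i; rewrite Ai => -[].
- by rewrite size_map size_filter.
exists g; split=> //; exists x => j.
have := fE (g j); case: ifP => Agj; last by move=> /hB [_ [_ /(_ x cube_x)]].
by move=> [_ ->]; apply: Ax; rewrite map_f // mem_filter Agj codom_f.
Qed.
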